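(* Let $S$ be a word of length $n$ and $C$ a word. If $C$ is an s-cover of $S$, then there exist positive integers $r_0,\dots,r_{n-1}$ such that the word $S[0]^{r_0}S[1]^{r_1}\cdots S[n-1]^{r_{n-1}}$ belongs to the shuffle closure $C^{\odot}$.
   Context: For words $C,S$, $C$ is an \emph{s-cover} of $S$ if for every position $i$ of $S$ there exist indices $j_0<\dots<j_{|C|-1}$ with $S[j_t]=C[t]$ for all $t$ and $i\in\{j_0,\dots,j_{|C|-1}\}$. For a letter $x$ and integer $r\ge1$, $x^r$ is $x$ repeated $r$ times. The shuffle closure $C^{\odot}$ is the set of words $W$ whose set of positions $\{0,\dots,|W|-1\}$ can be partitioned into pairwise disjoint sets, each of which is the set of positions $j_0<\dots<j_{|C|-1}$ of an occurrence of $C$ as a subsequence of $W$ (i.e., $W$ is an interleaving of copies of $C$). *)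

From mathcomp Require Import all_boot.
Set Implicit Arguments. Unset Strict Implicit. Unset Printing Implicit Defensive.

Section Words.
Variable T : eqType.

(* js : positions j_0 < ... < j_{|C|-1} of an occurrence of C as a
   subsequence of W (the default element x0 of nth is irrelevant since
   all indices are in range). *)
Definition occurrence (C W : seq T) (js : seq nat) : Prop :=
  [/\ size js = size C,
      sorted ltn js,
      all (fun j => j < size W) js &
      forall x0 : T, forall t, t < size C -> nth x0 W (nth 0 js t) = nth x0 C t].

Definition s_cover (C S : seq T) : Prop :=
  forall i, i < size S -> exists js, occurrence C S js /\ i \in js.

(* W belongs to the shuffle closure of C: positions of W are partitioned
   into pairwise disjoint blocks, each the position set of an occurrence
   of C.  Disjointness + covering = the concatenation of the blocks is a
   permutation of [0, ..., |W|-1]. *)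
Definition in_shuffle_closure (C W : seq T) : Prop :=
  exists P : seq (seq nat),
    (forall js, js \in P -> occurrence C W js) /\
    perm_eq (flatten P) (iota 0 (size W)).

Definition expand (S : seq T) (r : seq nat) : seq T :=
  flatten [seq nseq p.2 p.1 | p <- zip S r].

End Words.

From mathcomp Require Import all_boot.
Set Implicit Arguments. Unset Strict Implicit. Unset Printing Implicit Defensive.

(* Pick for every position i of S an occurrence L_i of C through i, and let
   r_k be the number of occurrences L_j using position k (r_k > 0 since k is
   in L_k).  Index the positions of S[0]^{r_0} ... S[n-1]^{r_{n-1}} by the
   slots (k, j) with k in L_j, ordered by k.  As each L_j is increasing, the
   slots (k, j) with k in L_j sit at increasing positions and spell C, and
   these blocks partition the positions of the expanded word. *)

Lemma choice_seq (A : Type) (a0 : A) (P : nat -> A -> Prop) n :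
  (forall i, i < n -> exists a, P i a) ->
  exists s : seq A, size s = n /\ forall i, i < n -> P i (nth a0 s i).
Proof.
elim: n => [|n IH] HP; first by exists [::].
have [s [size_s Ps]] := IH (fun i lt_in => HP i (ltnW lt_in)).
have [a Pa] := HP n (ltnSn n).
exists (rcons s a); split; first by rewrite size_rcons size_s.
move=> i; rewrite ltnS leq_eqVlt => /orP[/eqP->|lt_in].
  by rewrite nth_rcons size_s ltnn eqxx.
by rewrite nth_rcons size_s lt_in; apply: Ps.
Qed.

Lemma map_index_uniq (T : eqType) (s : seq T) :
  uniq s -> map (index^~ s) s = iota 0 (size s).
Proof.
case: s => [|x0 s'] // s_uniq; apply: (@eq_from_nth _ 0) => [|i].
  by rewrite size_map size_iota.
by rewrite size_map => lt_i; rewrite (nth_map x0) // nth_iota // index_uniq.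
Qed.

Lemma size_expand (T : eqType) (S : seq T) (r : seq nat) :
  size r = size S -> size (expand S r) = sumn r.
Proof.
elim: S r => [|x S IH] [|k r] //= [size_r].
by rewrite size_cat size_nseq IH.
Qed.

Section ShuffleOfOccurrences.

Variables (T : eqType) (C S : seq T) (Ls : seq (seq nat)).
Hypothesis Ls_occ : forall js, js \in Ls -> occurrence C S js.

Local Notation n := (size S).
Local Notation L j := (nth [::] Ls j).

Definition users k := [seq j <- iota 0 (size Ls) | k \in L j].

Definition multiplicities := [seq size (users k) | k <- iota 0 n].

Definition slots := [seq (k, j) | k <- iota 0 n, j <- users k].

Definition slot_block j := [seq index (k, j) slots | k <- L j].

Lemma occ_L j : j < size Ls -> occurrence C S (L j).
Proof. by move=> lt_j; apply/Ls_occ/mem_nth. Qed.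

Lemma L_bound j k : j < size Ls -> k \in L j -> k < n.
Proof. by move=> /occ_L[_ _ /allP L_lt _]; apply: L_lt. Qed.

Lemma mem_slots k j : ((k, j) \in slots) = (j < size Ls) && (k \in L j).
Proof.
apply/allpairsPdep/idP => [[k' [j' [_ + [-> ->]]]]|/andP[lt_j Lk]].
  by rewrite mem_filter mem_iota andbC.
exists k, j; split => //; first by rewrite mem_iota (L_bound lt_j Lk).
by rewrite mem_filter Lk mem_iota.
Qed.

Lemma slots_uniq : uniq slots.
Proof.
apply: allpairs_uniq_dep => [|k _|[k j] [k' j'] _ _ /= [-> ->]] //.
  exact: iota_uniq.
exact/filter_uniq/iota_uniq.
Qed.

Lemma slots_sorted : sorted (fun p q : nat * nat => p.1 <= q.1) slots.
Proof.
rewrite sorted_pairwise; last by move=> ? ? ?; apply: leq_trans.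
rewrite /slots; elim: n 0 => [|m IH] i //=.
rewrite pairwise_cat IH andbT; apply/andP; split.
  apply/allrelP => _ _ /mapP[j _ ->] /allpairsPdep[k [j' [+ _ ->]]] /=.
  by rewrite mem_iota => /andP[/ltnW].
rewrite pairwise_map; elim: (users i) => //= j s ->.
by rewrite andbT; apply/allP => x _ /=.
Qed.

Lemma expand_multiplicitiesE x0 :
  expand S multiplicities = [seq nth x0 S p.1 | p <- slots].
Proof.
rewrite /expand /multiplicities -[in zip S _](mkseq_nth x0 S) /mkseq.
rewrite size_map size_iota zip_map.
rewrite -map_comp /slots map_flatten -map_comp.
congr flatten; apply/eq_map => k /=.
by rewrite -map_comp; elim: (users k) => //= j s ->.
Qed.

Lemma size_expand_multiplicities : size (expand S multiplicities) = size slots.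
Proof.
by rewrite size_expand ?size_allpairs_dep // /multiplicities size_map size_iota.
Qed.

Lemma index_slots_ltn p q :
  p \in slots -> q \in slots -> p.1 < q.1 -> index p slots < index q slots.
Proof.
move=> Ep Eq; rewrite !ltnNge; apply: contra => le_qp.
have le_trans : transitive (fun p q : nat * nat => p.1 <= q.1).
  by move=> ? ? ?; apply: leq_trans.
by apply: (sorted_leq_index le_trans (fun p => leqnn p.1) slots_sorted).
Qed.

Lemma slot_block_occurrence j :
  j < size Ls -> occurrence C (expand S multiplicities) (slot_block j).
Proof.
move=> lt_j; have [size_L L_sorted _ L_nth] := occ_L lt_j.
have slot_j k : k \in L j -> (k, j) \in slots by rewrite mem_slots lt_j.
split.
- by rewrite size_map.
- apply: (homo_sorted_in (P := mem (L j))) L_sorted; last exact: allss.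
  by move=> k k' /slot_j Ek /slot_j Ek'; apply: (index_slots_ltn Ek Ek').
- apply/allP => _ /mapP[k Lk ->].
  by rewrite size_expand_multiplicities index_mem slot_j.
- move=> x0 t lt_t; rewrite -size_L in lt_t.
  have Lt := mem_nth 0 lt_t; have Et := slot_j _ Lt.
  rewrite (expand_multiplicitiesE x0) (nth_map 0) // (nth_map (0, 0)).
    by rewrite nth_index //= L_nth // -size_L.
  by rewrite index_mem.
Qed.

Lemma slot_blocks_partition :
  perm_eq (flatten [seq slot_block j | j <- iota 0 (size Ls)])
          (iota 0 (size (expand S multiplicities))).
Proof.
rewrite size_expand_multiplicities -(map_index_uniq slots_uniq).
pose slots_by_block := [seq (k, j) | j <- iota 0 (size Ls), k <- L j].
have uniq_by_block : uniq slots_by_block.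
  apply: allpairs_uniq_dep => [|j|[j k] [j' k'] _ _ /= [-> ->]] //.
    exact: iota_uniq.
  by rewrite mem_iota => /occ_L[_ /(sorted_uniq ltn_trans ltnn)].
have same_slots : slots_by_block =i slots.
  move=> [k j]; rewrite mem_slots.
  apply/allpairsPdep/idP => [[j' [k' [+ + [-> ->]]]]|/andP[lt_j Lk]].
    by rewrite mem_iota => /= -> ->.
  by exists j, k; rewrite mem_iota.
have := perm_map (index^~ slots) (uniq_perm uniq_by_block slots_uniq same_slots).
by rewrite map_allpairs.
Qed.

Lemma expand_multiplicities_shuffle :
  in_shuffle_closure C (expand S multiplicities).
Proof.
exists [seq slot_block j | j <- iota 0 (size Ls)]; split.
  by move=> js /mapP[j]; rewrite mem_iota => /= lt_j ->; apply: slot_block_occurrence.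
exact: slot_blocks_partition.
Qed.

Lemma multiplicities_gt0 :
  (forall k, k < n -> exists2 j, j < size Ls & k \in L j) ->
  all (fun r => 0 < r) multiplicities.
Proof.
move=> covered; apply/allP => m /mapP[k]; rewrite mem_iota => /= lt_k ->.
have [j lt_j Lk] := covered k lt_k.
have : j \in users k by rewrite mem_filter Lk mem_iota.
by case: (users k).
Qed.

End ShuffleOfOccurrences.

Theorem mainTheorem20 (T : eqType) (S C : seq T) :
  s_cover C S ->
  exists r : seq nat,
    [/\ size r = size S, all (fun k => 0 < k) r &
        in_shuffle_closure C (expand S r)].
Proof.
move=> cover.
have [Ls [size_Ls Ls_cover]] := choice_seq [::] cover.
have Ls_occ js : js \in Ls -> occurrence C S js.
  by move=> /(nthP [::])[i]; rewrite size_Ls => /Ls_cover[occ _] <-.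
exists (multiplicities S Ls); split.
- by rewrite size_map size_iota.
- apply: multiplicities_gt0 => k lt_k; exists k; first by rewrite size_Ls.
  by case: (Ls_cover k lt_k).
- exact: expand_multiplicities_shuffle.
Qed.
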